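(* Let $d\ge 1$, $0<\alpha<1$ and $\beta=1-\alpha$. Let $\sigma$ satisfy the Activation Assumption below, and let $\overline{A}\colon[0,1]\to\mathbb{R}^{d\times d}$ and $\overline{b}\colon[0,1]\to\mathbb{R}^d$ be deterministic functions for which there exist $M>0$, $\kappa>0$ with $\|\overline{A}_t-\overline{A}_s\|^2+\|\overline{b}_t-\overline{b}_s\|^2\le M|t-s|^\kappa$ for all $s,t\in[0,1]$. For each $L\in\mathbb{N}$ and $x\in\mathbb{R}^d$ define the (deterministic) hidden states $$h^{(L)}_0=x,\qquad h^{(L)}_{k+1}=h^{(L)}_k+L^{-\alpha}\,\sigma_d\!\left(A^{(L)}_k h^{(L)}_k+b^{(L)}_k\right),\quad k=0,\dots,L-1,$$ with $A^{(L)}_k=L^{-\beta}\overline{A}_{k/L}$ and $b^{(L)}_k=L^{-\beta}\overline{b}_{k/L}$. Assume there exist $p_1>4$ and $C_0>0$ such that $\sup_{0\le k\le L}\|h^{(L)}_k\|^{p_1}\le C_0$ for all $L$. Let $H$ be the solution of the linear ODE $$\frac{\mathrm{d}H_t}{\mathrm{d}t}=\overline{A}_tH_t+\overline{b}_t,\qquad H_0=x.$$ Then $\displaystyle\lim_{L\to\infty}\sup_{0\le t\le 1}\left\|H_t-h^{(L)}_{\lfloor tL\rfloor}\right\|=0.$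
   Context: $\|\cdot\|$ is the Euclidean norm on vectors and the Frobenius norm on matrices. For $\sigma\colon\mathbb{R}\to\mathbb{R}$, $\sigma_d(y)=(\sigma(y_1),\dots,\sigma(y_d))^\top$ denotes the componentwise extension to $y\in\mathbb{R}^d$. $\lfloor u\rfloor$ is the integer part of $u$. Activation Assumption: $\sigma\in\mathcal{C}^3(\mathbb{R},\mathbb{R})$, $\sigma(0)=0$, $\sigma'(0)=1$, and $\sigma'''$ is bounded on $\mathbb{R}$. *)

From HB Require Import structures.
From mathcomp Require Import all_boot all_order all_algebra.
From mathcomp Require Import all_classical all_reals all_analysis.
Set Implicit Arguments. Unset Strict Implicit. Unset Printing Implicit Defensive.
Import Order.TTheory GRing.Theory Num.Theory.
Import numFieldNormedType.Exports.
Local Open Scope classical_set_scope.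
Local Open Scope ring_scope.

Definition vnorm {R : realType} {d : nat} (v : 'cV[R]_d) : R :=
  Num.sqrt (\sum_(i < d) v i 0 ^+ 2).

Definition fnorm {R : realType} {d : nat} (A : 'M[R]_d) : R :=
  Num.sqrt (\sum_(i < d) \sum_(j < d) A i j ^+ 2).

Definition sigmad {R : realType} {d : nat} (s : R -> R) (v : 'cV[R]_d) : 'cV[R]_d :=
  map_mx s v.

Definition activation_assumption {R : realType} (s : R -> R) : Prop :=
  (forall y : R, derivable s y 1) /\
  (forall y : R, derivable (derive1 s) y 1) /\
  (forall y : R, derivable (derive1n 2 s) y 1) /\
  continuous (derive1n 3 s) /\
  s 0 = 0 /\ derive1 s 0 = 1 /\
  (exists K : R, forall y : R, `|derive1n 3 s y| <= K).

Fixpoint hstate {R : realType} {d : nat} (s : R -> R) (alpha : R)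
  (Abar : R -> 'M[R]_d) (bbar : R -> 'cV[R]_d) (x : 'cV[R]_d) (L k : nat)
  : 'cV[R]_d :=
  match k with
  | 0%N => x
  | k'.+1 =>
      let hk := hstate s alpha Abar bbar x L k' in
      let beta := 1 - alpha in
      let Ak := (L%:R `^ (- beta)) *: Abar (k'%:R / L%:R) in
      let bk := (L%:R `^ (- beta)) *: bbar (k'%:R / L%:R) in
      hk + (L%:R `^ (- alpha)) *: sigmad s (Ak *m hk + bk)
  end.

From HB Require Import structures.
From mathcomp Require Import all_boot all_order all_algebra.
From mathcomp Require Import all_classical all_reals all_analysis.
From mathcomp Require Import ring lra.
Set Implicit Arguments. Unset Strict Implicit. Unset Printing Implicit Defensive.
Import Order.TTheory GRing.Theory Num.Theory.
Import numFieldNormedType.Exports.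
Local Open Scope classical_set_scope.
Local Open Scope ring_scope.

(* The hidden states form an explicit Euler-type scheme for the linear ODE
   H' = A H + b with step 1/L:  since L^-alpha * L^-beta = 1/L and
   sigma(z) = z + o(z) near 0, one layer reads
     h_{k+1} = h_k + (1/L) (A_{k/L} h_k + b_{k/L}) + (activation defect),
   where the defect is o(1/L) uniformly because the pre-activations
   L^-beta (A h_k + b) tend to 0 uniformly (the h_k are bounded). *)

Section L1Norms.
Variables (R : realType) (d : nat).
Implicit Types (u v : 'cV[R]_d) (A B : 'M[R]_d).

Definition vnorm1 v : R := \sum_(i < d) `|v i 0|.
Definition mnorm1 A : R := \sum_(i < d) \sum_(j < d) `|A i j|.

Lemma term_le_sum (f : 'I_d -> R) (i : 'I_d) :
  (forall j, 0 <= f j) -> f i <= \sum_(j < d) f j.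
Proof.
by move=> f0; rewrite (bigD1 i) //= lerDl; apply: sumr_ge0 => j _; exact: f0.
Qed.

Lemma vnorm1_le_const v (K : R) : (forall i, `|v i 0| <= K) -> vnorm1 v <= d%:R * K.
Proof.
move=> hv; have -> : d%:R * K = \sum_(i < d) K by rewrite sumr_const card_ord mulr_natl.
by apply: ler_sum => i _.
Qed.

Lemma vnorm1_ge0 v : 0 <= vnorm1 v.
Proof. by apply: sumr_ge0 => i _. Qed.

Lemma mnorm1_ge0 A : 0 <= mnorm1 A.
Proof. by apply: sumr_ge0 => i _; apply: sumr_ge0. Qed.

Lemma vnorm1_entry v i : `|v i 0| <= vnorm1 v.
Proof. exact: (@term_le_sum (fun j => `|v j 0|)). Qed.

Lemma vnorm10 : vnorm1 0 = 0.
Proof. by rewrite /vnorm1 big1 // => i _; rewrite mxE normr0. Qed.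

Lemma vnorm1D u v : vnorm1 (u + v) <= vnorm1 u + vnorm1 v.
Proof.
rewrite /vnorm1 -big_split /=; apply: ler_sum => i _; rewrite mxE; exact: ler_normD.
Qed.

Lemma mnorm1D A B : mnorm1 (A + B) <= mnorm1 A + mnorm1 B.
Proof.
rewrite /mnorm1 -big_split /=; apply: ler_sum => i _.
rewrite -big_split /=; apply: ler_sum => j _; rewrite mxE; exact: ler_normD.
Qed.

Lemma vnorm1N v : vnorm1 (- v) = vnorm1 v.
Proof. by apply: eq_bigr => i _; rewrite mxE normrN. Qed.

Lemma vnorm1Z c v : vnorm1 (c *: v) = `|c| * vnorm1 v.
Proof. by rewrite /vnorm1 mulr_sumr; apply: eq_bigr => i _; rewrite mxE normrM. Qed.

Lemma vnorm1_dist u v : vnorm1 (u - v) = vnorm1 (v - u).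
Proof. by rewrite -vnorm1N opprB. Qed.

Lemma vnorm1_mul A v : vnorm1 (A *m v) <= mnorm1 A * vnorm1 v.
Proof.
rewrite /vnorm1 /mnorm1 mulr_suml; apply: ler_sum => i _; rewrite mxE.
apply: le_trans (ler_norm_sum _ _ _) _.
rewrite mulr_suml; apply: ler_sum => j _; rewrite normrM.
by apply: ler_wpM2l => //; apply: vnorm1_entry.
Qed.

Lemma vnorm_le_vnorm1 v : vnorm v <= vnorm1 v.
Proof.
rewrite /vnorm -(@ger0_norm _ (vnorm1 v)) ?vnorm1_ge0 // -sqrtr_sqr ler_wsqrtr //.
rewrite expr2 mulr_suml; apply: ler_sum => i _.
rewrite -[v i 0 ^+ 2]ger0_norm ?sqr_ge0 // expr2 normrM; apply: ler_wpM2l => //.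
exact: vnorm1_entry.
Qed.

Lemma entry_le_vnorm v i : `|v i 0| <= vnorm v.
Proof.
rewrite /vnorm -sqrtr_sqr ler_wsqrtr //.
by apply: (@term_le_sum (fun j => v j 0 ^+ 2)) => j; exact: sqr_ge0.
Qed.

Lemma vnorm1_le_vnorm v : vnorm1 v <= d%:R * vnorm v.
Proof. by apply: vnorm1_le_const => i; exact: entry_le_vnorm. Qed.

Lemma entry_le_fnorm A i j : `|A i j| <= fnorm A.
Proof.
rewrite /fnorm -sqrtr_sqr ler_wsqrtr //.
apply: le_trans (@term_le_sum (fun i => \sum_(j < d) A i j ^+ 2) i _).
  by apply: (@term_le_sum (fun j => A i j ^+ 2)) => k; exact: sqr_ge0.
by move=> k; apply: sumr_ge0 => *; exact: sqr_ge0.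
Qed.

Lemma mnorm1_le_fnorm A : mnorm1 A <= (d * d)%:R * fnorm A.
Proof.
have -> : (d * d)%:R * fnorm A = \sum_(i < d) \sum_(j < d) fnorm A.
  under eq_bigr do rewrite sumr_const card_ord.
  by rewrite sumr_const card_ord -mulrnA mulr_natl.
by apply: ler_sum => i _; apply: ler_sum => j _; apply: entry_le_fnorm.
Qed.

Lemma vnorm1_le_of_powR v (p C : R) :
  1 <= p -> vnorm v `^ p <= C -> vnorm1 v <= d%:R * (1 + C).
Proof.
move=> p1 hv; apply: le_trans (vnorm1_le_vnorm v) _; apply: ler_wpM2l => //.
have C0 : 0 <= C by apply: le_trans hv; exact: powR_ge0.
have [v1|v1] := leP (vnorm v) 1; first lra.
by have := le1r_powR (ltW v1) p1; lra.
Qed.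

End L1Norms.

Lemma sigma_near_id (R : realType) (s : R -> R) :
  derivable s 0 1 -> derive1 s 0 = 1 -> s 0 = 0 ->
  forall e : R, 0 < e -> exists2 eta : R, 0 < eta &
    forall z : R, `|z| <= eta -> `|s z - z| <= e * `|z|.
Proof.
move=> ds d1 s0 e e0.
have hl : (fun h : R => h^-1 *: ((s \o shift 0) (h *: 1) - s 0)) @ 0^' --> (1 : R).
  move: (ds) => /cvg_ex [l Hl].
  have E : 'D_1 s 0 = l by rewrite /derive; exact: cvg_lim.
  by rewrite -[X in _ --> X]d1 derive1E E.
move/cvgrPdist_le : hl => /(_ e e0) [eta eta0 Heta].
exists (eta / 2); first by rewrite divr_gt0.
move=> z zle.
have [->|z0] := eqVneq z 0; first by rewrite s0 subrr normr0 mulr0.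
have zlt : `|z| < eta.
  by apply: le_lt_trans zle _; rewrite ltr_pdivrMr // ltr_pMr // ltr1n.
have := Heta z; rewrite /= sub0r normrN => /(_ zlt z0).
rewrite s0 subr0 addr0 /GRing.scale /= mulr1.
have -> : 1 - z^-1 * s z = z^-1 * (z - s z) by rewrite mulrBr mulVf.
rewrite normrM normfV distrC => hz.
by rewrite -ler_pdivrMr ?normr_gt0 // mulrC.
Qed.

Lemma sigmad_near_id (R : realType) (d : nat) (s : R -> R) (y : 'cV[R]_d)
    (eps eta : R) :
  (forall z, `|z| <= eta -> `|s z - z| <= eps * `|z|) ->
  vnorm1 y <= eta -> vnorm1 (sigmad s y - y) <= eps * vnorm1 y.
Proof.
move=> hs hy; rewrite /vnorm1 mulr_sumr; apply: ler_sum => i _.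
by rewrite !mxE; apply: hs; exact: le_trans (vnorm1_entry _ _) hy.
Qed.

Lemma discrete_gronwall (R : realType) (q rho : R) (e : nat -> R) (n : nat) :
  1 <= q -> 0 <= rho -> e 0%N <= 0 ->
  (forall k, (k < n)%N -> e k.+1 <= q * e k + rho) ->
  forall k, (k <= n)%N -> e k <= q ^+ k * k%:R * rho.
Proof.
move=> q1 r0 e0 step; elim=> [|k IH] kn; first by rewrite mulr0 mul0r.
apply: le_trans (step k kn) _.
have q0 : 0 <= q by apply: le_trans q1.
have h1 := ler_wpM2l q0 (IH (ltnW kn)).
have h2 : rho <= q * q ^+ k * rho by apply: ler_peMl; rewrite // -exprS exprn_ege1.
have -> : q ^+ k.+1 * k.+1%:R * rho = q * (q ^+ k * k%:R * rho) + q * q ^+ k * rho.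
  by rewrite exprS -natr1; ring.
exact: lerD.
Qed.

(* The Gronwall amplification factor stays bounded uniformly in the depth. *)
Lemma pow_one_plus_le_expR (R : realType) (a : R) (n k : nat) :
  0 <= a -> (0 < n)%N -> (k <= n)%N -> (1 + a / n%:R) ^+ k <= expR a.
Proof.
move=> a0 n0 kn.
have n0' : 0 < n%:R :> R by rewrite ltr0n.
apply: le_trans (_ : expR (a / n%:R) ^+ k <= _).
  apply: lerXn2r; rewrite ?nnegrE ?expR_ge0 ?expR_ge1Dx //.
  by apply: addr_ge0 => //; apply: divr_ge0 => //; apply: ltW.
rewrite -expRM_natl ler_expR mulrC -mulrA ler_piMr // ler_pdivrMl // mulr1.
by rewrite ler_nat.
Qed.

Lemma holder_modulus (R : realType) (M kappa e : R) : 0 < M -> 0 < kappa -> 0 < e ->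
  exists2 del : R, 0 < del & forall r, 0 <= r -> r <= del -> M * r `^ kappa <= e.
Proof.
move=> M0 k0 e0.
exists ((e / M) `^ kappa^-1); first by apply: powR_gt0; rewrite divr_gt0.
move=> r r0 r_del; rewrite -ler_pdivlMl // mulrC.
have -> : e / M = ((e / M) `^ kappa^-1) `^ kappa.
  by rewrite -powRrM mulVf ?gt_eqF // powRr1 // ltW // divr_gt0.
by apply: ge0_ler_powR; rewrite ?nnegrE ?powR_ge0 //; exact: ltW.
Qed.

Lemma le_of_sqr_sum_le (R : realType) (x y c : R) : 0 <= x -> 0 <= y -> 0 <= c ->
  x ^+ 2 + y ^+ 2 <= c ^+ 2 -> x <= c /\ y <= c.
Proof. by move=> *; split; nra. Qed.

Lemma powR_neg_small (R : realType) (beta eta : R) : 0 < beta -> 0 < eta ->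
  \forall n \near \oo, n%:R `^ (- beta) <= eta.
Proof.
move=> b0 e0; near=> n.
have n1 : (eta^-1) `^ beta^-1 <= n%:R by near: n; exact: nbhs_infty_ger.
have np : 0 < n%:R :> R.
  by rewrite ltr0n; near: n; exact: nbhs_infty_gt.
rewrite powRN -[X in _ <= X]invrK lef_pV2 ?posrE ?invr_gt0 ?powR_gt0 //.
have -> : eta^-1 = ((eta^-1) `^ beta^-1) `^ beta.
  by rewrite -powRrM mulVf ?gt_eqF // powRr1 // ltW // invr_gt0.
apply: ge0_ler_powR; rewrite ?nnegrE ?powR_ge0 //; exact: ltW.
Unshelve. all: by end_near.
Qed.

Lemma inv_nat_small (R : realType) (r : R) : 0 < r -> \forall n \near \oo, n%:R^-1 <= r.
Proof.
move=> r0; near=> n.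
have h : r^-1 <= n%:R by near: n; exact: nbhs_infty_ger.
have n0 : 0 < n%:R :> R by apply: lt_le_trans h; rewrite invr_gt0.
by rewrite -[X in _ <= X]invrK lef_pV2 ?posrE ?invr_gt0.
Unshelve. all: by end_near.
Qed.

(* The two scalings of a layer multiply to the Euler step 1/N. *)
Lemma powR_split (R : realType) (alpha N : R) :
  0 < N -> N `^ (- alpha) * N `^ (- (1 - alpha)) = N^-1.
Proof.
move=> N0; rewrite -powRD; last by apply/implyP => _; rewrite gt_eqF.
have -> : - alpha + - (1 - alpha) = -1 by ring.
by rewrite powR_inv1 // ltW.
Qed.

Lemma sup_cvg0 (R : realType) (T : Type) (D : set T) (f : nat -> T -> R) :
  D !=set0 -> (forall n t, D t -> 0 <= f n t) ->
  (forall e, 0 < e -> \forall n \near \oo, forall t, D t -> f n t <= e) ->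
  (fun n => sup [set f n t | t in D]) @ \oo --> (0 : R).
Proof.
move=> [t0 Dt0] f0 small; apply/cvgrPdist_le => e e0; near=> n.
have ub : ubound [set f n t | t in D] e.
  move=> y [t Dt <-]; move: t Dt; near: n; exact: small.
rewrite sub0r normrN ger0_norm; first by apply: ge_sup => //; exists (f n t0), t0.
apply: le_trans (f0 n t0 Dt0) _; apply: ub_le_sup; first by exists e.
by exists t0.
Unshelve. all: by end_near.
Qed.

Lemma coord_continuous_within (R : realType) (d : nat) (H : R -> 'cV[R]_d)
    (D : set R) (i : 'I_d) :
  {within D, continuous H} -> {within D, continuous (fun t => H t i 0)}.
Proof.
move=> HC x.
exact: (@continuous_comp _ _ _ (from_subspace D H) (fun v : 'cV[R]_d => v i 0)
  x (HC x) (@coord_continuous _ _ _ i 0 _)).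
Qed.

Lemma coord_is_derive (R : realType) (d : nat) (H : R -> 'cV[R]_d) (t : R)
    (D : 'cV[R]_d) (i : 'I_d) :
  is_derive t 1 H D -> is_derive t 1 (fun t => H t i 0) (D i 0).
Proof.
move=> [dH vH].
have dHi : derivable (fun t => H t i 0) t 1 by move/derivable_mxP: dH; apply.
by apply: DeriveDef => //; rewrite -vH derive_mx // mxE.
Qed.

Lemma bounded_on_01 (R : realType) (f : R -> R) :
  {within `[0, 1], continuous f} -> exists K : R, forall t, t \in `[0, 1] -> `|f t| <= K.
Proof.
move=> fc.
have [c1 _ h1] := EVT_max ler01 fc.
have [c2 _ h2] := EVT_min ler01 fc.
exists (`|f c1| + `|f c2|) => t t01.
have := h1 t t01; have := h2 t t01.
have := normr_ge0 (f c1); have := normr_ge0 (f c2).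
have := ler_norm (f c1); have := ler_norm (- f c2); rewrite normrN.
by rewrite ler_norml; lra.
Qed.

Section ResidualLimit.
Variables (R : realType) (d : nat) (Abar : R -> 'M[R]_d) (bbar : R -> 'cV[R]_d)
  (H : R -> 'cV[R]_d) (M kappa : R).
Hypotheses (M0 : 0 < M) (kappa0 : 0 < kappa).
Hypothesis holder : forall s0 t : R, s0 \in `[0, 1] -> t \in `[0, 1] ->
  fnorm (Abar t - Abar s0) ^+ 2 + vnorm (bbar t - bbar s0) ^+ 2
    <= M * `|t - s0| `^ kappa.
Hypothesis H_cont : {within `[0, 1], continuous H}.
Hypothesis H_ode : forall t : R, t \in `]0, 1[ ->
  is_derive t 1 H (Abar t *m H t + bbar t).

Definition ode_rhs (t : R) : 'cV[R]_d := Abar t *m H t + bbar t.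

Lemma coef_increment a c (eps : R) : a \in `[0, 1] -> c \in `[0, 1] -> 0 <= eps ->
  M * `|c - a| `^ kappa <= eps ^+ 2 ->
  mnorm1 (Abar c - Abar a) <= (d * d)%:R * eps /\ vnorm1 (bbar c - bbar a) <= d%:R * eps.
Proof.
move=> a01 c01 eps0 small.
have [hA hb] := le_of_sqr_sum_le (sqrtr_ge0 _) (sqrtr_ge0 _) eps0
  (le_trans (holder a01 c01) small).
split; first by apply: le_trans (mnorm1_le_fnorm _) _; apply: ler_wpM2l.
by apply: le_trans (vnorm1_le_vnorm _) _; apply: ler_wpM2l.
Qed.

Lemma coef_bounded : exists2 mA : R, 0 <= mA & exists2 mb : R, 0 <= mb &
  forall t, t \in `[0, 1] -> mnorm1 (Abar t) <= mA /\ vnorm1 (bbar t) <= mb.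
Proof.
have z01 : (0 : R) \in `[0, 1] by rewrite in_itv /= lexx ler01.
have M1 : 0 <= M + 1 by have := M0; lra.
exists (mnorm1 (Abar 0) + (d * d)%:R * (M + 1)).
  by apply: addr_ge0; [exact: mnorm1_ge0 | exact: mulr_ge0].
exists (vnorm1 (bbar 0) + d%:R * (M + 1)).
  by apply: addr_ge0; [exact: vnorm1_ge0 | exact: mulr_ge0].
move=> t t01.
have tk : M * `|t - 0| `^ kappa <= (M + 1) ^+ 2.
  have : `|t - 0| `^ kappa <= 1.
    apply: (@le_trans _ _ (1 `^ kappa)); last by rewrite powR1.
    apply: ge0_ler_powR; rewrite ?nnegrE //; first exact: ltW.
    by move: t01; rewrite in_itv /= subr0 => /andP [t0 t1]; rewrite ger0_norm.
  have := powR_ge0 `|t - 0| kappa; have := M0; nra.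
have [hA hb] := coef_increment z01 t01 M1 tk.
split.
  rewrite -[Abar t](subrK (Abar 0)) addrC.
  by apply: le_trans (mnorm1D _ _) _; rewrite lerD2l.
rewrite -[bbar t](subrK (bbar 0)) addrC.
by apply: le_trans (vnorm1D _ _) _; rewrite lerD2l.
Qed.

Lemma coef_modulus (eps : R) : 0 < eps -> exists2 del : R, 0 < del &
  forall a c, a \in `[0, 1] -> c \in `[0, 1] -> `|c - a| <= del ->
  mnorm1 (Abar c - Abar a) <= (d * d)%:R * eps /\ vnorm1 (bbar c - bbar a) <= d%:R * eps.
Proof.
move=> eps0.
have [del del0 hdel] := holder_modulus M0 kappa0 (exprn_gt0 2 eps0).
exists del => // a c a01 c01 ca.
by apply: coef_increment (ltW eps0) _ => //; apply: hdel.
Qed.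

Lemma solution_bounded : exists2 KH : R, 0 <= KH &
  forall t, t \in `[0, 1] -> vnorm1 (H t) <= KH.
Proof.
have Hi i : exists K : R, forall t, t \in `[0, 1] -> `|H t i 0| <= K.
  exact/bounded_on_01/coord_continuous_within.
have [f hf] := boolp.choice Hi.
exists (\sum_(i < d) `|f i|); first by apply: sumr_ge0.
move=> t t01; apply: ler_sum => i _.
by apply: le_trans (hf i t t01) _; apply: ler_norm.
Qed.

Lemma coord_mvt a b (i : 'I_d) : 0 <= a -> a < b -> b <= 1 ->
  exists2 c, c \in `]a, b[ & H b i 0 - H a i 0 = ode_rhs c i 0 * (b - a).
Proof.
move=> a0 ab b1.
have D c : c \in `]a, b[ -> is_derive c 1 (fun t => H t i 0) (ode_rhs c i 0).
  rewrite in_itv /= => /andP [c1 c2].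
  apply: coord_is_derive; apply: H_ode; rewrite in_itv /=; apply/andP; split.
    exact: le_lt_trans a0 c1.
  exact: lt_le_trans c2 b1.
have C : {within `[a, b], continuous (fun t => H t i 0)}.
  apply: (continuous_subspaceW _ (coord_continuous_within (i := i) H_cont)).
  move=> y /=; rewrite !in_itv /= => /andP [y1 y2]; apply/andP; split.
    exact: le_trans a0 y1.
  exact: le_trans y2 b1.
have [c c1 c2] := @MVT R (fun t => H t i 0) (fun t => ode_rhs t i 0) a b ab D C.
by exists c.
Qed.

Section Bounds.
Variables (mA mb KH : R).
Hypotheses (mA0 : 0 <= mA) (mb0 : 0 <= mb) (KH0 : 0 <= KH).
Hypothesis mA_bound : forall t, t \in `[0, 1] -> mnorm1 (Abar t) <= mA.
Hypothesis mb_bound : forall t, t \in `[0, 1] -> vnorm1 (bbar t) <= mb.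
Hypothesis KH_bound : forall t, t \in `[0, 1] -> vnorm1 (H t) <= KH.

Let KF := mA * KH + mb.

Lemma affine_bound t (h : 'cV[R]_d) (K : R) : t \in `[0, 1] -> vnorm1 h <= K ->
  vnorm1 (Abar t *m h + bbar t) <= mA * K + mb.
Proof.
move=> t01 hK; apply: le_trans (vnorm1D _ _) _; apply: lerD; last exact: mb_bound.
apply: le_trans (vnorm1_mul _ _) _.
by apply: ler_pM => //; [exact: mnorm1_ge0 | exact: vnorm1_ge0 | exact: mA_bound].
Qed.

Lemma solution_lipschitz a b : a \in `[0, 1] -> b \in `[0, 1] ->
  vnorm1 (H b - H a) <= d%:R * KF * `|b - a|.
Proof.
wlog ab : a b / a <= b.
  move=> sym a01 b01; have [ab|ba] := leP a b; first exact: sym.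
  by rewrite vnorm1_dist distrC; apply: sym => //; exact: ltW.
move=> a01 b01; rewrite -mulrA; apply: vnorm1_le_const => i; rewrite !mxE.
move: ab; rewrite le_eqVlt => /orP [/eqP ->|ab]; first by rewrite !subrr normr0 mulr0.
move: (a01) (b01); rewrite !in_itv /= => /andP [a0 _] /andP [_ b1].
have [c c_ab ->] := coord_mvt i a0 ab b1.
have c01 : c \in `[0, 1].
  move: c_ab; rewrite !in_itv /= => /andP [c1 c2]; apply/andP; split.
    exact: le_trans a0 (ltW c1).
  exact: le_trans (ltW c2) b1.
rewrite normrM; apply: ler_wpM2r => //.
exact: le_trans (vnorm1_entry _ _) (affine_bound c01 (KH_bound c01)).
Qed.

Lemma rhs_increment a c (etaA etab : R) : a \in `[0, 1] -> c \in `[0, 1] ->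
  mnorm1 (Abar c - Abar a) <= etaA -> vnorm1 (bbar c - bbar a) <= etab ->
  vnorm1 (ode_rhs c - ode_rhs a) <= mA * (d%:R * KF * `|c - a|) + etaA * KH + etab.
Proof.
move=> a01 c01 hA hb.
have -> : ode_rhs c - ode_rhs a =
    Abar c *m (H c - H a) + (Abar c - Abar a) *m H a + (bbar c - bbar a).
  by rewrite /ode_rhs mulmxBr mulmxBl; apply/matrixP => i j; rewrite !mxE; ring.
apply: le_trans (vnorm1D _ _) _; apply: lerD => //.
apply: le_trans (vnorm1D _ _) _; apply: lerD.
  apply: le_trans (vnorm1_mul _ _) _.
  by apply: ler_pM; [exact: mnorm1_ge0 | exact: vnorm1_ge0 | exact: mA_bound |
    exact: solution_lipschitz].
apply: le_trans (vnorm1_mul _ _) _.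
by apply: ler_pM; [exact: mnorm1_ge0 | exact: vnorm1_ge0 | exact: hA | exact: KH_bound].
Qed.

Let W := mA * (d%:R * KF) + (d * d)%:R * KH + d%:R.

Lemma rhs_modulus (eps : R) : 0 < eps -> exists2 del : R, 0 < del &
  forall a c, a \in `[0, 1] -> c \in `[0, 1] -> `|c - a| <= del -> `|c - a| <= eps ->
  vnorm1 (ode_rhs c - ode_rhs a) <= eps * W.
Proof.
move=> eps0; have [del del0 coef_uc] := coef_modulus eps0.
exists del => // a c a01 c01 ca_del ca_eps.
have [hA hb] := coef_uc a c a01 c01 ca_del.
apply: le_trans (rhs_increment a01 c01 hA hb) _.
have -> : eps * W = mA * (d%:R * KF * eps) + (d * d)%:R * eps * KH + d%:R * eps.
  by rewrite /W; ring.
rewrite lerD2r lerD2r; apply: ler_wpM2l => //; apply: ler_wpM2l => //.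
by apply: mulr_ge0 => //; apply: addr_ge0 => //; exact: mulr_ge0.
Qed.

Lemma euler_consistency (n k : nat) (om : R) : (0 < n)%N -> (k < n)%N ->
  (forall a c, a \in `[0, 1] -> c \in `[0, 1] -> `|c - a| <= n%:R^-1 ->
     vnorm1 (ode_rhs c - ode_rhs a) <= om) ->
  vnorm1 (H (k.+1%:R / n%:R) - H (k%:R / n%:R) - n%:R^-1 *: ode_rhs (k%:R / n%:R))
    <= d%:R * (n%:R^-1 * om).
Proof.
move=> n0 kn hom.
have N0 : 0 < n%:R :> R by rewrite ltr0n.
set a := k%:R / n%:R; set b := k.+1%:R / n%:R.
have ba : b - a = n%:R^-1 by rewrite /a /b -mulrBl -natrB // subSnn mul1r.
have a0 : 0 <= a by rewrite /a divr_ge0 // ltW.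
have b1 : b <= 1 by rewrite /b ler_pdivrMr // mul1r ler_nat.
have ab : a < b by rewrite -subr_gt0 ba invr_gt0.
have a01 : a \in `[0, 1] by rewrite in_itv /= a0 /=; apply: le_trans (ltW ab) b1.
apply: vnorm1_le_const => i.
have [c c_ab E] := coord_mvt i a0 ab b1.
move: c_ab; rewrite in_itv /= => /andP [c1 c2].
have c01 : c \in `[0, 1].
  by rewrite in_itv /=; apply/andP; split; [exact: le_trans a0 (ltW c1) |
    exact: le_trans (ltW c2) b1].
have -> : (H b - H a - n%:R^-1 *: ode_rhs a) i 0 = n%:R^-1 * (ode_rhs c - ode_rhs a) i 0.
  by rewrite !mxE E ba !mxE; ring.
rewrite normrM ger0_norm; last by rewrite invr_ge0 ltW.
apply: ler_wpM2l; first by rewrite invr_ge0 ltW.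
apply: le_trans (vnorm1_entry _ _) (hom a c a01 c01 _).
rewrite ger0_norm; last by rewrite subr_ge0 ltW.
by rewrite -ba lerD2r ltW.
Qed.

Section Scheme.
Variables (alpha : R) (s : R -> R) (x : 'cV[R]_d) (Kh : R).
Hypothesis Kh0 : 0 <= Kh.
Hypothesis H0 : H 0 = x.
Hypothesis hidden_bounded : forall n k : nat, (k <= n)%N ->
  vnorm1 (hstate s alpha Abar bbar x n k) <= Kh.

Local Notation h := (hstate s alpha Abar bbar x).

Let B := mA * Kh + mb.

Definition preactivation (n : nat) (t : R) (hk : 'cV[R]_d) : 'cV[R]_d :=
  n%:R `^ (- (1 - alpha)) *: (Abar t *m hk + bbar t).

Lemma hstate_succ (n k : nat) :
  h n k.+1 = h n k + n%:R `^ (- alpha) *: sigmad s (preactivation n (k%:R / n%:R) (h n k)).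
Proof. by rewrite /= /preactivation scalerDr scalemxAl. Qed.

(* Splitting of the one-step error: propagated error, Euler consistency
   error, linear growth term and activation defect. *)
Lemma error_decomposition (Hk Hk1 hk S b : 'cV[R]_d) (A : 'M[R]_d) (ca cb c : R) :
  ca * cb = c ->
  Hk1 - (hk + ca *: S) = (Hk - hk) + (Hk1 - Hk - c *: (A *m Hk + b))
     + c *: (A *m (Hk - hk)) - ca *: (S - cb *: (A *m hk + b)).
Proof. by move=> <-; rewrite mulmxBr; apply/matrixP => i j; rewrite !mxE; ring. Qed.

(* The activation defect of one layer is o(1/n): pre-activations are
   O(n^-beta), where sigma is eps-close to the identity. *)
Lemma activation_defect (n : nat) t (hk : 'cV[R]_d) (eps eta : R) :
  (0 < n)%N -> t \in `[0, 1] -> 0 <= eps ->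
  (forall z, `|z| <= eta -> `|s z - z| <= eps * `|z|) ->
  vnorm1 hk <= Kh -> n%:R `^ (- (1 - alpha)) * B <= eta ->
  vnorm1 (n%:R `^ (- alpha) *: (sigmad s (preactivation n t hk) - preactivation n t hk))
    <= n%:R^-1 * (eps * B).
Proof.
move=> n0 t01 eps0 hs hk_bound heta; set y := preactivation n t hk.
have N0 : 0 < n%:R :> R by rewrite ltr0n.
set ca := n%:R `^ (- alpha); set cb := n%:R `^ (- (1 - alpha)).
have ca0 : 0 <= ca by apply: powR_ge0.
have cb0 : 0 <= cb by apply: powR_ge0.
have y_small : vnorm1 y <= cb * B.
  by rewrite /y /preactivation vnorm1Z ger0_norm //; apply: ler_wpM2l => //; exact: affine_bound.
have := sigmad_near_id hs (le_trans y_small heta).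
rewrite vnorm1Z ger0_norm // -(powR_split alpha N0) -/ca -/cb => defect.
have -> : ca * cb * (eps * B) = ca * (eps * (cb * B)) by ring.
by apply: ler_wpM2l => //; apply: le_trans defect _; apply: ler_wpM2l.
Qed.

Lemma local_error_step (n k : nat) (om eps eta : R) :
  (0 < n)%N -> (k < n)%N -> 0 <= eps ->
  (forall a c, a \in `[0, 1] -> c \in `[0, 1] -> `|c - a| <= n%:R^-1 ->
     vnorm1 (ode_rhs c - ode_rhs a) <= om) ->
  (forall z, `|z| <= eta -> `|s z - z| <= eps * `|z|) ->
  n%:R `^ (- (1 - alpha)) * B <= eta ->
  vnorm1 (H (k.+1%:R / n%:R) - h n k.+1)
    <= (1 + mA / n%:R) * vnorm1 (H (k%:R / n%:R) - h n k)
       + n%:R^-1 * (d%:R * om + eps * B).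
Proof.
move=> n0 kn eps0 hom hs heta.
have N0 : 0 < n%:R :> R by rewrite ltr0n.
have t01 : (k%:R / n%:R : R) \in `[0, 1].
  rewrite in_itv /=; apply/andP; split; first by rewrite divr_ge0 // ltW.
  by rewrite ler_pdivrMr // mul1r ler_nat ltnW.
have consistency := euler_consistency n0 kn hom.
have defect := activation_defect n0 t01 eps0 hs (hidden_bounded (ltnW kn)) heta.
rewrite hstate_succ (error_decomposition (H (k%:R / n%:R)) _ _ _
  (bbar (k%:R / n%:R)) (Abar (k%:R / n%:R)) (powR_split alpha N0)).
set t := k%:R / n%:R in t01 consistency defect *.
set err := vnorm1 (H t - h n k).
have growth : vnorm1 (n%:R^-1 *: (Abar t *m (H t - h n k))) <= n%:R^-1 * (mA * err).
  rewrite vnorm1Z ger0_norm; last by rewrite invr_ge0 ltW.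
  apply: ler_wpM2l; first by rewrite invr_ge0 ltW.
  apply: le_trans (vnorm1_mul _ _) _.
  by apply: ler_wpM2r; [exact: vnorm1_ge0 | exact: mA_bound].
apply: le_trans (vnorm1D _ _) _; rewrite vnorm1N.
apply: le_trans (lerD (vnorm1D _ _) (lexx _)) _.
apply: le_trans (lerD (lerD (vnorm1D _ _) (lexx _)) (lexx _)) _.
apply: le_trans (lerD (lerD (lerD (lexx _) consistency) growth) defect) _.
by rewrite /err le_eqVlt; apply/orP; left; apply/eqP; ring.
Qed.

(* Gronwall turns the one-step recursion into a bound on the whole grid. *)
Lemma grid_error (n : nat) (om eps eta : R) :
  (0 < n)%N -> 0 <= eps -> 0 <= om ->
  (forall a c, a \in `[0, 1] -> c \in `[0, 1] -> `|c - a| <= n%:R^-1 ->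
     vnorm1 (ode_rhs c - ode_rhs a) <= om) ->
  (forall z, `|z| <= eta -> `|s z - z| <= eps * `|z|) ->
  n%:R `^ (- (1 - alpha)) * B <= eta ->
  forall k, (k <= n)%N ->
  vnorm1 (H (k%:R / n%:R) - h n k) <= expR mA * (d%:R * om + eps * B).
Proof.
move=> n0 eps0 om0 hom hs heta k kn.
have N0 : 0 < n%:R :> R by rewrite ltr0n.
have B0 : 0 <= B by rewrite /B addr_ge0 // mulr_ge0.
have q1 : 1 <= 1 + mA / n%:R by rewrite lerDl divr_ge0 // ltW.
have rho0 : 0 <= n%:R^-1 * (d%:R * om + eps * B).
  apply: mulr_ge0; first by rewrite invr_ge0 ltW.
  by apply: addr_ge0; apply: mulr_ge0.
have e0 : vnorm1 (H (0%:R / n%:R) - h n 0) <= 0 by rewrite mul0r H0 subrr vnorm10.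
have step j : (j < n)%N -> vnorm1 (H (j.+1%:R / n%:R) - h n j.+1) <=
    (1 + mA / n%:R) * vnorm1 (H (j%:R / n%:R) - h n j) + n%:R^-1 * (d%:R * om + eps * B).
  by move=> jn; exact: local_error_step n0 jn eps0 hom hs heta.
apply: le_trans (discrete_gronwall q1 rho0 e0 step kn) _.
have -> : expR mA * (d%:R * om + eps * B) =
    expR mA * n%:R * (n%:R^-1 * (d%:R * om + eps * B)).
  by rewrite -mulrA [n%:R * _]mulrA mulfV ?gt_eqF // mul1r.
apply: ler_wpM2r => //; apply: ler_pM => //; first exact: exprn_ge0 (le_trans ler01 q1).
  exact: pow_one_plus_le_expR.
by rewrite ler_nat.
Qed.

(* Between grid points the solution moves by at most O(1/n). *)
Lemma interpolation_error (n : nat) (om eps eta : R) :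
  (0 < n)%N -> 0 <= eps -> 0 <= om ->
  (forall a c, a \in `[0, 1] -> c \in `[0, 1] -> `|c - a| <= n%:R^-1 ->
     vnorm1 (ode_rhs c - ode_rhs a) <= om) ->
  (forall z, `|z| <= eta -> `|s z - z| <= eps * `|z|) ->
  n%:R `^ (- (1 - alpha)) * B <= eta ->
  forall t, t \in `[0, 1] ->
  vnorm (H t - h n (Num.truncn (t * n%:R)))
    <= d%:R * KF * n%:R^-1 + expR mA * (d%:R * om + eps * B).
Proof.
move=> n0 eps0 om0 hom hs heta t t01.
have N0 : 0 < n%:R :> R by rewrite ltr0n.
move: (t01); rewrite in_itv /= => /andP [t0 t1].
have /andP [k1 k2] := truncn_itv (mulr_ge0 t0 (ltW N0)).
set k := Num.truncn (t * n%:R) in k1 k2 *.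
have kn : (k <= n)%N.
  rewrite /k truncn_le_nat; apply: le_lt_trans (_ : n%:R < _); last by rewrite ltr_nat.
  by rewrite -[X in _ <= X]mul1r ler_wpM2r // ltW.
have k01 : (k%:R / n%:R : R) \in `[0, 1].
  rewrite in_itv /=; apply/andP; split; first by rewrite divr_ge0 // ltW.
  by rewrite ler_pdivrMr // mul1r ler_nat.
have tk : `|t - k%:R / n%:R| <= n%:R^-1.
  have -> : t - k%:R / n%:R = (t * n%:R - k%:R) / n%:R by rewrite mulrBl mulfK // gt_eqF.
  rewrite ger0_norm; last by rewrite divr_ge0 ?subr_ge0 // ltW.
  rewrite ler_pdivrMr // mulVf ?gt_eqF //.
  by move: k2; rewrite -natr1 => k2; lra.
apply: le_trans (vnorm_le_vnorm1 _) _.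
rewrite -[H t](subrK (H (k%:R / n%:R))) -addrA.
apply: le_trans (vnorm1D _ _) _; apply: lerD; last exact: (grid_error n0 eps0 om0 hom hs heta kn).
apply: le_trans (solution_lipschitz k01 t01) _.
apply: ler_wpM2l => //; apply: mulr_ge0 => //.
by apply: addr_ge0 => //; apply: mulr_ge0.
Qed.

Lemma uniform_error_small (e : R) :
  alpha < 1 -> derivable s 0 1 -> derive1 s 0 = 1 -> s 0 = 0 -> 0 < e ->
  \forall n \near \oo, forall t, t \in `[0, 1] ->
    vnorm (H t - h n (Num.truncn (t * n%:R))) <= e.
Proof.
move=> alpha1 ds s'0 s0 e0.
have KF0 : 0 <= KF by rewrite /KF addr_ge0 // mulr_ge0.
have B0 : 0 <= B by rewrite /B addr_ge0 // mulr_ge0.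
have W0 : 0 <= W.
  by rewrite /W; apply: addr_ge0 => //; apply: addr_ge0; apply: mulr_ge0 => //;
    exact: mulr_ge0.
set C := d%:R * KF + expR mA * (d%:R * W + B).
have C0 : 0 <= C.
  apply: addr_ge0; first exact: mulr_ge0.
  by apply: mulr_ge0; [exact: expR_ge0 | apply: addr_ge0 => //; exact: mulr_ge0].
set eps := e / (C + 1).
have eps0 : 0 < eps by rewrite divr_gt0 //; lra.
have [eta eta0 hs] := sigma_near_id ds s'0 s0 eps0.
have [del del0 rhs_uc] := rhs_modulus eps0.
near=> n; move=> t t01.
have n0 : (0 < n)%N by near: n; exact: nbhs_infty_gt.
have n_del : n%:R^-1 <= del by near: n; exact: inv_nat_small.
have n_eps : n%:R^-1 <= eps by near: n; exact: inv_nat_small.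
have n_beta : n%:R `^ (- (1 - alpha)) <= eta / (B + 1).
  by near: n; apply: powR_neg_small; [lra | rewrite divr_gt0 //; lra].
have heta : n%:R `^ (- (1 - alpha)) * B <= eta.
  apply: le_trans (ler_wpM2r B0 n_beta) _.
  rewrite mulrAC ler_pdivrMr; last by lra.
  by apply: ler_wpM2l; [exact: ltW | lra].
have hom a c : a \in `[0, 1] -> c \in `[0, 1] -> `|c - a| <= n%:R^-1 ->
    vnorm1 (ode_rhs c - ode_rhs a) <= eps * W.
  by move=> a01 c01 ca; apply: rhs_uc => //; apply: le_trans ca _.
apply: le_trans (interpolation_error n0 (ltW eps0) (mulr_ge0 (ltW eps0) W0) hom hs heta t01) _.
apply: le_trans (_ : eps * C <= _).
  rewrite /C [eps * (_ + _)]mulrDr; apply: lerD.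
    by rewrite [eps * _]mulrC; apply: ler_wpM2l => //; exact: mulr_ge0.
  by rewrite le_eqVlt; apply/orP; left; apply/eqP; ring.
rewrite /eps mulrAC ler_pdivrMr; last by lra.
by apply: ler_wpM2l; [exact: ltW | lra].
Unshelve. all: by end_near.
Qed.

End Scheme.
End Bounds.
End ResidualLimit.

Theorem theorem1 (R : realType) (d : nat) (alpha : R) (s : R -> R)
  (Abar : R -> 'M[R]_d) (bbar : R -> 'cV[R]_d) (x : 'cV[R]_d)
  (M kappa p1 C0 : R) (H : R -> 'cV[R]_d) :
  (0 < d)%N ->
  0 < alpha < 1 ->
  activation_assumption s ->
  0 < M -> 0 < kappa ->
  (forall s0 t : R, s0 \in `[0, 1] -> t \in `[0, 1] ->
     fnorm (Abar t - Abar s0) ^+ 2 + vnorm (bbar t - bbar s0) ^+ 2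
       <= M * `|t - s0| `^ kappa) ->
  4 < p1 -> 0 < C0 ->
  (forall L k : nat, (k <= L)%N ->
     vnorm (hstate s alpha Abar bbar x L k) `^ p1 <= C0) ->
  H 0 = x ->
  {within `[0, 1], continuous H} ->
  (forall t : R, t \in `]0, 1[ ->
     is_derive t 1 H (Abar t *m H t + bbar t)) ->
  (fun L : nat =>
     sup [set vnorm (H t - hstate s alpha Abar bbar x L (Num.truncn (t * L%:R)))
         | t in `[0, 1]]) @ \oo --> (0 : R).
Proof.
move=> _ /andP [_ alpha1] [ds [_ [_ [_ [s0 [s'0 _]]]]]] M0 kappa0 holder p1_gt4 C0_gt0
  hidden_pow H0 H_cont H_ode.
have [mA mA0 [mb mb0 coef_bd]] := coef_bounded M0 kappa0 holder.
have [KH KH0 KH_bd] := solution_bounded H_cont.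
(* The moment bound on the hidden states is only used as an l1 bound. *)
have hidden_bd n k : (k <= n)%N ->
    vnorm1 (hstate s alpha Abar bbar x n k) <= d%:R * (1 + C0).
  by move=> kn; apply: vnorm1_le_of_powR (hidden_pow n k kn); lra.
have Kh0 : 0 <= d%:R * (1 + C0) by apply: mulr_ge0 => //; lra.
have mA_bd t : t \in `[0, 1] -> mnorm1 (Abar t) <= mA by move=> /coef_bd [].
have mb_bd t : t \in `[0, 1] -> vnorm1 (bbar t) <= mb by move=> /coef_bd [].
apply: sup_cvg0 => [|n t _|e e0].
- by exists 0; rewrite /= in_itv /= lexx ler01.
- exact: sqrtr_ge0.
- exact: (uniform_error_small M0 kappa0 holder H_cont H_ode mA0 mb0 KH0 mA_bd mb_bd
    KH_bd Kh0 H0 hidden_bd alpha1 (ds 0) s'0 s0 e0).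
Qed.
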